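(* Consider the system \[ \begin{aligned} \dot S_h(t)&=\beta_h-C_{vh}\frac{I_v(t)}{N_v(t)}S_h(t)-\mu_hS_h(t),\\ \dot I_h(t)&=C_{vh}\frac{I_v(t-\tau)}{N_v(t-\tau)}S_h(t-\tau)-\mu_hI_h(t),\\ \dot S_v(t)&=\beta_v-C_{hv}I_h(t)S_v(t)-\mu_vS_v(t),\\ \dot I_v(t)&=C_{hv}I_h(t)S_v(t)-\mu_vI_v(t), \end{aligned} \] with $N_v=S_v+I_v$ and positive parameters $\beta_h,\beta_v,\mu_h,\mu_v,C_{vh},C_{hv}$. Let $R_0=\sqrt{C_{vh}C_{hv}\beta_h/(\mu_h^2\mu_v)}$. If $R_0>1$, then for every $\tau\ge0$ the system is weakly persistent in $D$.
   Context: $C_+=\{\varphi\in C([-\tau,0],\mathbb{R}_+^4):\varphi_3(\theta)+\varphi_4(\theta)>0\ \forall\theta\in[-\tau,0]\}$ with the sup-norm, and $D=\{\varphi\in C_+:\varphi_2(0)>0\}$. The system is called weakly persistent (in $D$) if for the solution through any $\varphi\in D$, $\limsup_{t\to\infty}u(t)>0$ for each $u\in\{S_h,I_h,S_v,I_v\}$. *)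

From Stdlib Require Import Reals Lra.
From Coquelicot Require Import Coquelicot.
Open Scope R_scope.

Definition cont_within_ge (a : R) (f : R -> R) (t : R) : Prop :=
  filterlim f (within (fun s => a <= s) (locally t)) (locally (f t)).

(* The initial history (the restriction of (Sh,Ih,Sv,Iv) to [-tau,0])
   belongs to D = { phi in C_+ : phi_2(0) > 0 }, where
   C_+ = { phi in C([-tau,0], R_+^4) : phi_3(θ) + phi_4(θ) > 0 on [-tau,0] }.
   Continuity of phi on [-tau,0] is part of [is_solution] below. *)
Definition history_in_D (tau : R) (Sh Ih Sv Iv : R -> R) : Prop :=
  (forall th, -tau <= th <= 0 ->
     0 <= Sh th /\ 0 <= Ih th /\ 0 <= Sv th /\ 0 <= Iv th /\
     0 < Sv th + Iv th) /\
  0 < Ih 0.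

Definition is_solution (beta_h beta_v mu_h mu_v C_vh C_hv tau : R)
    (Sh Ih Sv Iv : R -> R) : Prop :=
  (forall t, -tau <= t ->
     cont_within_ge (-tau) Sh t /\ cont_within_ge (-tau) Ih t /\
     cont_within_ge (-tau) Sv t /\ cont_within_ge (-tau) Iv t) /\
  (forall t, 0 < t ->
     is_derive Sh t
       (beta_h - C_vh * (Iv t / (Sv t + Iv t)) * Sh t - mu_h * Sh t) /\
     is_derive Ih t
       (C_vh * (Iv (t - tau) / (Sv (t - tau) + Iv (t - tau))) * Sh (t - tau)
        - mu_h * Ih t) /\
     is_derive Sv t (beta_v - C_hv * Ih t * Sv t - mu_v * Sv t) /\
     is_derive Iv t (C_hv * Ih t * Sv t - mu_v * Iv t)).

(* limsup_{t -> +oo} u(t) > 0, written out: there is eps > 0 such that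
   u(t) > eps for arbitrarily large t. *)
Definition limsup_pos (u : R -> R) : Prop :=
  exists eps, 0 < eps /\ forall T, exists t, T <= t /\ eps < u t.

Definition weakly_persistent_in_D (beta_h beta_v mu_h mu_v C_vh C_hv tau : R)
  : Prop :=
  forall Sh Ih Sv Iv : R -> R,
    history_in_D tau Sh Ih Sv Iv ->
    is_solution beta_h beta_v mu_h mu_v C_vh C_hv tau Sh Ih Sv Iv ->
    limsup_pos Sh /\ limsup_pos Ih /\ limsup_pos Sv /\ limsup_pos Iv.

Definition basic_R0 (beta_h mu_h mu_v C_vh C_hv : R) : R :=
  sqrt (C_vh * C_hv * beta_h / (mu_h ^ 2 * mu_v)).

From Stdlib Require Import Reals Lra Classical.
From Coquelicot Require Import Coquelicot.
Open Scope R_scope.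

(* Positivity of the solution and comparison with linear equations [u' <= m (K - u)] bound
   every component and make [S_h] and [S_v] persist; they also show that [I_v -> 0] forces
   [I_h -> 0] and conversely.  If [I_h -> 0], then eventually [S_v >= r beta_v / mu_v],
   [S_h >= r beta_h / mu_h] and [N_v <= beta_v / (r mu_v)] for every [r < 1].  Choosing
   [r^3 R_0^2 >= 1], the functional
   [V = I_v + k (I_h + int_{t - tau}^t C_vh I_v S_h / N_v)] is eventually nondecreasing,
   so it stays above a positive value although it tends to [0]. *)

Definition limsup_nonpos (u : R -> R) : Prop :=
  forall e, 0 < e -> Rbar_locally p_infty (fun t => u t <= e).

Lemma not_limsup_pos (u : R -> R) : ~ limsup_pos u -> limsup_nonpos u.
Proof.
  intros Hn e He. apply NNPP; intros Hev. apply Hn. exists e; split; [exact He|].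
  intros T. apply NNPP; intros Hnone. apply Hev. exists T. intros t Ht.
  apply Rnot_lt_le; intros Hlt. apply Hnone. exists t; split; [lra|exact Hlt].
Qed.

Lemma limsup_pos_of_eventually_ge (u : R -> R) (c : R) : 0 < c ->
  Rbar_locally p_infty (fun t => c <= u t) -> limsup_pos u.
Proof.
  intros Hc [M HM]. exists (c / 2). split; [lra|]. intros T.
  exists (Rmax T M + 1). split.
  - generalize (Rmax_l T M); lra.
  - generalize (Rmax_r T M). intros Hr. generalize (HM (Rmax T M + 1) ltac:(lra)). lra.
Qed.

Lemma limsup_nonpos_not_eventually_ge (u : R -> R) (c : R) : 0 < c -> limsup_nonpos u ->
  ~ Rbar_locally p_infty (fun t => c <= u t).
Proof.
  intros Hc Hu Hge. destruct (filter_and _ _ Hge (Hu (c / 2) ltac:(lra))) as [M HM].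
  destruct (HM (M + 1) ltac:(lra)). lra.
Qed.

Lemma eventually_gt (a : R) : Rbar_locally p_infty (fun t => a < t).
Proof. exists a. tauto. Qed.

Lemma eventually_forall_after (P : R -> Prop) (d : R) : Rbar_locally p_infty P ->
  Rbar_locally p_infty (fun t => forall s, t - d <= s -> P s).
Proof. intros [M HM]. exists (M + d). intros t Ht s Hs. apply HM. lra. Qed.

Lemma cont_within_ge_le (a b : R) (f : R -> R) (t : R) :
  a <= b -> cont_within_ge a f t -> cont_within_ge b f t.
Proof.
  intros Hab H. eapply filterlim_filter_le_1; [|exact H].
  intros P HP. unfold within in *. eapply filter_imp; [|exact HP]. intros x Hx Hbx. apply Hx. lra.
Qed.

Lemma cont_within_ge_of_derive (a : R) (f : R -> R) (t l : R) :
  is_derive f t l -> cont_within_ge a f t.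
Proof.
  intros H. eapply filterlim_filter_le_1; [apply filter_le_within|].
  apply (ex_derive_continuous (K := R_AbsRing) (V := R_NormedModule)). exists l; exact H.
Qed.

Lemma cont_within_ge_opp (a : R) (f : R -> R) (t : R) :
  cont_within_ge a f t -> cont_within_ge a (fun s => - f s) t.
Proof.
  intros H. eapply filterlim_comp; [exact H|].
  apply (filterlim_opp (K := R_AbsRing) (V := R_NormedModule)).
Qed.

Lemma cont_within_ge_eps (a : R) (f : R -> R) : cont_within_ge a f a -> forall eps, 0 < eps ->
  exists d, 0 < d /\ forall x, a <= x < a + d -> Rabs (f x - f a) < eps.
Proof.
  intros H eps He.
  destruct (proj1 (filterlim_locally f (f a)) H (mkposreal eps He)) as [d Hd].
  exists d. split; [apply cond_pos|]. intros x Hx. apply (Hd x); [|lra].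
  change (Rabs (x - a) < d). rewrite Rabs_right; lra.
Qed.

Lemma continuity_pt_of_derive (f : R -> R) (t l : R) : is_derive f t l -> continuity_pt f t.
Proof.
  intros H. apply continuity_pt_filterlim.
  apply (ex_derive_continuous (K := R_AbsRing) (V := R_NormedModule)). exists l; exact H.
Qed.

Lemma cont_within_ge_plus (a : R) (f g : R -> R) (t : R) :
  cont_within_ge a f t -> cont_within_ge a g t -> cont_within_ge a (fun s => f s + g s) t.
Proof.
  intros Hf Hg. eapply filterlim_comp_2; [exact Hf|exact Hg|].
  apply (filterlim_plus (K := R_AbsRing) (V := R_NormedModule)).
Qed.

Lemma continuity_pt_eps (f : R -> R) (t : R) : continuity_pt f t -> forall eps, 0 < eps ->
  exists d, 0 < d /\ forall x, Rabs (x - t) < d -> Rabs (f x - f t) < eps.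
Proof.
  intros H eps He. apply continuity_pt_filterlim in H.
  destruct (proj1 (filterlim_locally f (f t)) H (mkposreal eps He)) as [d Hd].
  exists d. split; [apply cond_pos|]. intros x Hx. apply (Hd x), Hx.
Qed.

Lemma exists_between_near (a b d : R) : a < b -> 0 < d ->
  exists x, a < x < b /\ x < a + d.
Proof.
  intros Hab Hd. exists (a + Rmin d (b - a) / 2).
  generalize (Rmin_l d (b - a)) (Rmin_r d (b - a)) (Rmin_glb_lt d (b - a) 0 Hd ltac:(lra)).
  lra.
Qed.

Lemma le_of_derive_nonneg (f df : R -> R) (x y : R) : x <= y ->
  (forall t, x <= t <= y -> is_derive f t (df t)) ->
  (forall t, x <= t <= y -> 0 <= df t) -> f x <= f y.
Proof.
  intros Hxy Hd Hpos.
  destruct (MVT_gen f x y df) as [c [Hc Heq]];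
    rewrite ?Rmin_left, ?Rmax_right in * by lra.
  - intros t Ht. apply Hd. lra.
  - intros t Ht. apply (continuity_pt_of_derive f t (df t)), Hd. lra.
  - assert (0 <= df c * (y - x)) by (apply Rmult_le_pos; [apply Hpos|]; lra). lra.
Qed.

Lemma nondecreasing_of_derive (f df : R -> R) (a b : R) : a <= b -> cont_within_ge a f a ->
  (forall t, a < t <= b -> is_derive f t (df t)) ->
  (forall t, a < t <= b -> 0 <= df t) -> f a <= f b.
Proof.
  intros Hab Hc Hd Hpos. apply Rnot_lt_le; intros Hlt.
  destruct (Req_dec a b) as [<-|Hne]; [lra|].
  destruct (cont_within_ge_eps a f Hc (f a - f b)) as [d [Hd0 Hclose]]; [lra|].
  destruct (exists_between_near a b d ltac:(lra) Hd0) as [x [Hx Hxd]].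
  assert (Hxb : f x <= f b).
  { apply (le_of_derive_nonneg f df); [lra| |]; intros t Ht; [apply Hd|apply Hpos]; lra. }
  assert (Hxa : Rabs (f x - f a) < f a - f b) by (apply Hclose; lra).
  apply Rabs_def2 in Hxa. lra.
Qed.

(** * Linear differential inequalities *)

Lemma is_derive_exp_weighted (f : R -> R) (df K m T t : R) : is_derive f t df ->
  is_derive (fun s => (f s - K) * exp (m * (s - T))) t
    ((df + m * (f t - K)) * exp (m * (t - T))).
Proof.
  intros H. auto_derive; [exists df; exact H|].
  replace (Derive (fun x => f x) t) with df by (symmetry; apply is_derive_unique; exact H).
  unfold Rminus. ring.
Qed.

Lemma cont_within_ge_exp_weighted (f : R -> R) (a K m T : R) : cont_within_ge a f a ->
  cont_within_ge a (fun s => (f s - K) * exp (m * (s - T))) a.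
Proof.
  intros H. unfold cont_within_ge.
  eapply (filterlim_comp_2 (fun s => f s - K) (fun s => exp (m * (s - T))) Rmult);
    [| |apply (filterlim_mult (K := R_AbsRing))].
  - eapply (filterlim_comp_2 f (fun _ => - K) Rplus); [exact H|apply filterlim_const|].
    apply (filterlim_plus (K := R_AbsRing) (V := R_NormedModule)).
  - apply (cont_within_ge_of_derive a (fun s => exp (m * (s - T))) a (m * exp (m * (a - T)))).
    auto_derive; [exact I|]. unfold Rminus. ring.
Qed.

(* Variation of constants: [(f - K) e^{m (t - T)}] is nondecreasing. *)
Lemma linear_ineq_lower (f df : R -> R) (K m T b : R) : T <= b -> cont_within_ge T f T ->
  (forall t, T < t <= b -> is_derive f t (df t)) ->
  (forall t, T < t <= b -> m * (K - f t) <= df t) ->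
  K + (f T - K) * exp (- (m * (b - T))) <= f b.
Proof.
  intros Hb Hc Hd Hineq.
  assert (Hmono : (f T - K) * exp (m * (T - T)) <= (f b - K) * exp (m * (b - T))).
  { apply (nondecreasing_of_derive (fun s => (f s - K) * exp (m * (s - T)))
             (fun t => (df t + m * (f t - K)) * exp (m * (t - T)))); [exact Hb| | |].
    - apply cont_within_ge_exp_weighted, Hc.
    - intros t Ht. apply is_derive_exp_weighted, Hd, Ht.
    - intros t Ht. apply Rmult_le_pos; [|apply Rlt_le, exp_pos].
      specialize (Hineq t Ht). lra. }
  replace (T - T) with 0 in Hmono by ring. rewrite Rmult_0_r, exp_0, Rmult_1_r in Hmono.
  assert (Hinv : exp (m * (b - T)) * exp (- (m * (b - T))) = 1)
    by (rewrite <- exp_plus, Rplus_opp_r; apply exp_0).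
  assert (Hpos : 0 < exp (- (m * (b - T)))) by apply exp_pos.
  apply (Rmult_le_compat_r (exp (- (m * (b - T))))) in Hmono; [|lra].
  rewrite Rmult_assoc, Hinv in Hmono. lra.
Qed.

Lemma linear_ineq_upper (f df : R -> R) (K m T b : R) : T <= b -> cont_within_ge T f T ->
  (forall t, T < t <= b -> is_derive f t (df t)) ->
  (forall t, T < t <= b -> df t <= m * (K - f t)) ->
  f b <= K + (f T - K) * exp (- (m * (b - T))).
Proof.
  intros Hb Hc Hd Hineq.
  enough (- K + (- f T - - K) * exp (- (m * (b - T))) <= - f b) by lra.
  apply (linear_ineq_lower (fun s => - f s) (fun s => - df s)); [exact Hb| | |].
  - apply cont_within_ge_opp, Hc.
  - intros t Ht. apply (is_derive_opp (K := R_AbsRing) (V := R_NormedModule)), Hd, Ht.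
  - intros t Ht. specialize (Hineq t Ht). lra.
Qed.

Lemma exp_neg_bounds (x : R) : 0 <= x -> 0 < exp (- x) <= 1.
Proof.
  intros Hx. split; [apply exp_pos|].
  rewrite <- exp_0. destruct (Rle_lt_or_eq_dec 0 x Hx) as [Hlt|<-].
  - left. apply exp_increasing. lra.
  - rewrite Ropp_0. lra.
Qed.

Lemma linear_ineq_ge_Rmin (f df : R -> R) (K m T : R) : 0 <= m -> cont_within_ge T f T ->
  (forall t, T < t -> is_derive f t (df t)) ->
  (forall t, T < t -> m * (K - f t) <= df t) ->
  forall b, T <= b -> Rmin (f T) K <= f b.
Proof.
  intros Hm Hc Hd Hineq b Hb.
  assert (Hlow := linear_ineq_lower f df K m T b Hb Hc
                    (fun t Ht => Hd t (proj1 Ht)) (fun t Ht => Hineq t (proj1 Ht))).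
  assert (Hexp := exp_neg_bounds (m * (b - T)) ltac:(nra)).
  destruct (Rle_or_lt (f T) K).
  - rewrite Rmin_left by lra. nra.
  - rewrite Rmin_right by lra. nra.
Qed.

Lemma linear_ineq_le_Rmax (f df : R -> R) (K m T : R) : 0 <= m -> cont_within_ge T f T ->
  (forall t, T < t -> is_derive f t (df t)) ->
  (forall t, T < t -> df t <= m * (K - f t)) ->
  forall b, T <= b -> f b <= Rmax (f T) K.
Proof.
  intros Hm Hc Hd Hineq b Hb.
  assert (Hup := linear_ineq_upper f df K m T b Hb Hc
                   (fun t Ht => Hd t (proj1 Ht)) (fun t Ht => Hineq t (proj1 Ht))).
  assert (Hexp := exp_neg_bounds (m * (b - T)) ltac:(nra)).
  destruct (Rle_or_lt (f T) K).
  - rewrite Rmax_right by lra. nra.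
  - rewrite Rmax_left by lra. nra.
Qed.

Lemma exp_decay_eventually (C m d : R) : 0 < m -> 0 < d ->
  Rbar_locally p_infty (fun x => C * exp (- (m * x)) <= d).
Proof.
  intros Hm Hd. exists (Rabs C / (m * d)). intros x Hx.
  assert (HC : C <= Rabs C) by apply Rle_abs.
  assert (Hmx : Rabs C <= d * (m * x)).
  { apply (Rmult_lt_compat_l (m * d)) in Hx; [|nra].
    replace (m * d * (Rabs C / (m * d))) with (Rabs C) in Hx by (field; lra). lra. }
  assert (Hexp := exp_ineq1_le (m * x)).
  assert (Hinv : exp (m * x) * exp (- (m * x)) = 1)
    by (rewrite <- exp_plus, Rplus_opp_r; apply exp_0).
  assert (0 < exp (- (m * x))) by apply exp_pos.
  assert (C * exp (- (m * x)) <= d * exp (m * x) * exp (- (m * x))); [|nra].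
  apply Rmult_le_compat_r; nra.
Qed.

Lemma linear_ineq_eventually_ge (f df : R -> R) (K m : R) : 0 < m ->
  (forall t, 0 < t -> is_derive f t (df t)) ->
  Rbar_locally p_infty (fun t => m * (K - f t) <= df t) ->
  forall d, 0 < d -> Rbar_locally p_infty (fun t => K - d <= f t).
Proof.
  intros Hm Hd [M HM] d Hd0.
  set (T := Rmax M 0 + 1).
  assert (HT : M < T /\ 0 < T) by (generalize (Rmax_l M 0) (Rmax_r M 0); unfold T; lra).
  destruct (exp_decay_eventually (K - f T) m d Hm Hd0) as [X HX].
  exists (T + Rmax X 0). intros b Hb.
  assert (Hlow := linear_ineq_lower f df K m T b ltac:(generalize (Rmax_r X 0); lra)
                    (cont_within_ge_of_derive T f T (df T) (Hd T (proj2 HT)))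
                    (fun t Ht => Hd t ltac:(lra)) (fun t Ht => HM t ltac:(lra))).
  specialize (HX (b - T) ltac:(generalize (Rmax_l X 0); lra)). lra.
Qed.

Lemma linear_ineq_eventually_le (f df : R -> R) (K m : R) : 0 < m ->
  (forall t, 0 < t -> is_derive f t (df t)) ->
  Rbar_locally p_infty (fun t => df t <= m * (K - f t)) ->
  forall d, 0 < d -> Rbar_locally p_infty (fun t => f t <= K + d).
Proof.
  intros Hm Hd Hineq d Hd0.
  assert (Hneg := linear_ineq_eventually_ge (fun s => - f s) (fun s => - df s) (- K) m Hm).
  eapply filter_imp; [|apply Hneg; [|eapply filter_imp; [|exact Hineq]|exact Hd0]].
  - simpl. intros t Ht. lra.
  - intros t Ht. apply (is_derive_opp (K := R_AbsRing) (V := R_NormedModule)), Hd, Ht.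
  - simpl. intros t Ht. lra.
Qed.

Lemma limsup_nonpos_of_linear_ineq (f df : R -> R) (m : R) : 0 < m ->
  (forall t, 0 < t -> is_derive f t (df t)) ->
  (forall e, 0 < e -> Rbar_locally p_infty (fun t => df t <= m * (e - f t))) ->
  limsup_nonpos f.
Proof.
  intros Hm Hd Hineq e He.
  eapply filter_imp; [|apply (linear_ineq_eventually_le f df (e / 2) m Hm Hd
                               (Hineq (e / 2) ltac:(lra)) (e / 2) ltac:(lra))].
  simpl. intros t Ht. lra.
Qed.

(* With [e = m (1 - r) / 2] the perturbed equilibrium [2 w / (3 - r)] exceeds [(1 + r) w / 2]. *)
Lemma eventually_ge_of_perturbed_linear_ineq (f df : R -> R) (A m : R) : 0 < A -> 0 < m ->
  (forall t, 0 < t -> is_derive f t (df t)) ->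
  (forall e, 0 < e -> Rbar_locally p_infty (fun t => A - (m + e) * f t <= df t)) ->
  forall r, 0 < r < 1 -> Rbar_locally p_infty (fun t => r * (A / m) <= f t).
Proof.
  intros HA Hm Hd Hineq r Hr.
  set (w := A / m). assert (Hw : 0 < w) by (apply Rdiv_lt_0_compat; lra).
  set (K := 2 * w / (3 - r)).
  assert (HKr : r * w <= K - (1 - r) * w / 2).
  { enough (0 <= K - (1 - r) * w / 2 - r * w) by lra.
    replace (K - (1 - r) * w / 2 - r * w) with (w * (1 - r) ^ 2 / (2 * (3 - r)))
      by (unfold K; field; lra).
    apply Rdiv_le_0_compat; [apply Rmult_le_pos; [lra|apply pow2_ge_0]|lra]. }
  set (e := m * (1 - r) / 2).
  assert (He : 0 < e)
    by (unfold e; assert (0 < m * (1 - r)) by (apply Rmult_lt_0_compat; lra); lra).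
  assert (Hrate : Rbar_locally p_infty (fun t => (m + e) * (K - f t) <= df t)).
  { eapply filter_imp; [|apply (Hineq e He)]. simpl. intros t Ht.
    replace ((m + e) * (K - f t)) with (A - (m + e) * f t) by (unfold K, w, e; field; lra).
    exact Ht. }
  assert (Hd0 : 0 < (1 - r) * w / 2)
    by (apply Rdiv_lt_0_compat; [apply Rmult_lt_0_compat|]; lra).
  eapply filter_imp;
    [|apply (linear_ineq_eventually_ge f df K (m + e) ltac:(lra) Hd Hrate _ Hd0)].
  simpl. intros t Ht. lra.
Qed.

Lemma is_lub_approx (E : R -> Prop) (s : R) : is_lub E s ->
  forall d, 0 < d -> exists x, E x /\ s - d < x.
Proof.
  intros [Hub Hlub] d Hd. apply NNPP; intros Hn.
  enough (s <= s - d) by lra.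
  apply Hlub. intros x Hx. apply Rnot_lt_le. intros Hlt. apply Hn. exists x. tauto.
Qed.

Lemma nonneg_invariant (f df : R -> R) (a b : R) : cont_within_ge a f a ->
  (forall t, a < t <= b -> is_derive f t (df t)) ->
  0 <= f a -> (forall t, a < t <= b -> f t <= 0 -> 0 < df t) ->
  forall t, a <= t <= b -> 0 <= f t.
Proof.
  intros Hc Hd Ha Hdf t0 Ht0. apply Rnot_lt_le; intros Hneg.
  set (E := fun x => a <= x <= t0 /\ 0 <= f x).
  destruct (completeness E) as [s Hs].
  { exists t0. intros x Hx. apply Hx. }
  { exists a. split; [lra|exact Ha]. }
  assert (Has : a <= s) by (apply (proj1 Hs); split; [lra|exact Ha]).
  assert (Hst : s <= t0) by (apply (proj2 Hs); intros x Hx; apply Hx).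
  assert (Hafter : forall x, s < x <= t0 -> f x < 0).
  { intros x Hx. apply Rnot_le_lt; intros Hfx.
    assert (x <= s) by (apply (proj1 Hs); split; [lra|exact Hfx]). lra. }
  assert (Hfs : 0 <= f s).
  { apply Rnot_lt_le; intros Hfs.
    destruct (Req_dec a s) as [<-|Hne]; [lra|].
    destruct (continuity_pt_eps f s (continuity_pt_of_derive f s (df s) (Hd s ltac:(lra)))
                (- f s)) as [d [Hd0 Hclose]]; [lra|].
    destruct (is_lub_approx E s Hs d Hd0) as [x [[Hx Hfx] Hsx]].
    assert (x <= s) by (apply (proj1 Hs); split; assumption).
    assert (Hxs : Rabs (f x - f s) < - f s) by (apply Hclose; rewrite Rabs_left1; lra).
    apply Rabs_def2 in Hxs. lra. }
  assert (Hst' : s < t0) by (destruct (Req_dec s t0); subst; lra).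
  assert (f s <= f t0); [|lra].
  apply (nondecreasing_of_derive f df); [lra| | |].
  - destruct (Req_dec a s) as [<-|Hne]; [exact Hc|].
    apply (cont_within_ge_of_derive s f s (df s)), Hd. lra.
  - intros t Ht. apply Hd. lra.
  - intros t Ht. left. apply Hdf; [lra|]. left. apply Hafter. lra.
Qed.

Lemma exists_first_root (f : R -> R) (a b : R) : a <= b -> cont_within_ge a f a ->
  (forall t, a < t <= b -> continuity_pt f t) -> 0 < f a -> f b <= 0 ->
  exists c, a < c <= b /\ f c = 0 /\ forall t, a <= t < c -> 0 < f t.
Proof.
  intros Hab Hca Hc Ha Hb.
  set (E := fun x => a <= x <= b /\ forall t, a <= t <= x -> 0 < f t).
  destruct (completeness E) as [c Hlub].
  { exists b. intros x Hx. apply Hx. }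
  { exists a. split; [lra|]. intros t Ht. replace t with a by lra. exact Ha. }
  assert (Hcb : c <= b) by (apply (proj2 Hlub); intros x Hx; apply Hx).
  assert (Hbefore : forall t, a <= t < c -> 0 < f t).
  { intros t Ht. destruct (is_lub_approx E c Hlub (c - t)) as [x [[Hx Hpos] Htx]]; [lra|].
    apply Hpos. lra. }
  assert (Hac : a < c).
  { destruct (cont_within_ge_eps a f Hca (f a) Ha) as [d [Hd0 Hclose]].
    assert (Hab' : a < b) by (destruct (Req_dec a b); subst; lra).
    destruct (exists_between_near a b d Hab' Hd0) as [x [Hx Hxd]].
    assert (x <= c); [|lra].
    apply (proj1 Hlub). split; [lra|]. intros t Ht.
    assert (Hta : Rabs (f t - f a) < f a) by (apply Hclose; lra).
    apply Rabs_def2 in Hta. lra. }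
  exists c. split; [lra|]. split; [|exact Hbefore].
  destruct (Rtotal_order (f c) 0) as [Hneg|[Hzero|Hpos]]; [exfalso|exact Hzero|exfalso].
  - destruct (continuity_pt_eps f c (Hc c ltac:(lra)) (- f c)) as [d [Hd0 Hclose]]; [lra|].
    set (t := Rmax a (c - d / 2)).
    assert (Ht : a <= t < c /\ c - d / 2 <= t).
    { unfold t. split; [split; [apply Rmax_l|apply Rmax_lub_lt; lra]|apply Rmax_r]. }
    assert (Htc : Rabs (f t - f c) < - f c) by (apply Hclose; rewrite Rabs_left1; lra).
    apply Rabs_def2 in Htc. specialize (Hbefore t (proj1 Ht)). lra.
  - assert (Hcb' : c < b) by (destruct (Req_dec c b); subst; lra).
    destruct (continuity_pt_eps f c (Hc c ltac:(lra)) (f c)) as [d [Hd0 Hclose]]; [lra|].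
    destruct (exists_between_near c b d Hcb' Hd0) as [x [Hx Hxd]].
    assert (x <= c); [|lra].
    apply (proj1 Hlub). split; [lra|]. intros t Ht.
    destruct (Rlt_or_le t c); [apply Hbefore; lra|].
    assert (Htc : Rabs (f t - f c) < f c) by (apply Hclose; rewrite Rabs_right; lra).
    apply Rabs_def2 in Htc. lra.
Qed.

(** * The delayed vector-host system *)

Lemma cube_root_choice (p q : R) : 0 < q < p -> exists r, 0 < r < 1 /\ q <= r ^ 3 * p.
Proof.
  intros Hqp. set (d := (p - q) / (3 * p)).
  assert (Hd : 0 < d < 1 / 3).
  { unfold d. split; [apply Rdiv_lt_0_compat; lra|].
    apply (Rmult_lt_reg_r (3 * p)); [lra|]. unfold Rdiv. rewrite Rmult_assoc, Rinv_l; lra. }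
  exists (1 - d). split; [lra|].
  replace q with ((1 - 3 * d) * p) by (unfold d; field; lra).
  apply Rmult_le_compat_r; [lra|]. nra.
Qed.

Section VectorHostModel.

Variables beta_h beta_v mu_h mu_v C_vh C_hv tau : R.
Hypotheses (Hbeta_h : 0 < beta_h) (Hbeta_v : 0 < beta_v) (Hmu_h : 0 < mu_h)
  (Hmu_v : 0 < mu_v) (HC_vh : 0 < C_vh) (HC_hv : 0 < C_hv) (Htau : 0 <= tau).
Variables Sh Ih Sv Iv : R -> R.
Hypothesis Hhist : history_in_D tau Sh Ih Sv Iv.
Hypothesis Hsol : is_solution beta_h beta_v mu_h mu_v C_vh C_hv tau Sh Ih Sv Iv.

Definition Nv (t : R) : R := Sv t + Iv t.
Definition incidence (t : R) : R := C_vh * (Iv t / Nv t) * Sh t.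

Lemma Sh_derive t : 0 < t -> is_derive Sh t (beta_h - incidence t - mu_h * Sh t).
Proof. intros Ht. exact (proj1 (proj2 Hsol t Ht)). Qed.

Lemma Ih_derive t : 0 < t -> is_derive Ih t (incidence (t - tau) - mu_h * Ih t).
Proof. intros Ht. exact (proj1 (proj2 (proj2 Hsol t Ht))). Qed.

Lemma Sv_derive t : 0 < t -> is_derive Sv t (beta_v - C_hv * Ih t * Sv t - mu_v * Sv t).
Proof. intros Ht. exact (proj1 (proj2 (proj2 (proj2 Hsol t Ht)))). Qed.

Lemma Iv_derive t : 0 < t -> is_derive Iv t (C_hv * Ih t * Sv t - mu_v * Iv t).
Proof. intros Ht. exact (proj2 (proj2 (proj2 (proj2 Hsol t Ht)))). Qed.

Lemma Sh_cont T : 0 <= T -> cont_within_ge T Sh T.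
Proof. intros HT. apply (cont_within_ge_le (- tau)); [lra|]. apply (proj1 Hsol T). lra. Qed.

Lemma Ih_cont T : 0 <= T -> cont_within_ge T Ih T.
Proof. intros HT. apply (cont_within_ge_le (- tau)); [lra|]. apply (proj1 Hsol T). lra. Qed.

Lemma Sv_cont T : 0 <= T -> cont_within_ge T Sv T.
Proof. intros HT. apply (cont_within_ge_le (- tau)); [lra|]. apply (proj1 Hsol T). lra. Qed.

Lemma Iv_cont T : 0 <= T -> cont_within_ge T Iv T.
Proof. intros HT. apply (cont_within_ge_le (- tau)); [lra|]. apply (proj1 Hsol T). lra. Qed.

Lemma Nv_derive t : 0 < t -> is_derive Nv t (mu_v * (beta_v / mu_v - Nv t)).
Proof.
  intros Ht. unfold Nv.
  replace (mu_v * (beta_v / mu_v - (Sv t + Iv t)))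
    with ((beta_v - C_hv * Ih t * Sv t - mu_v * Sv t) + (C_hv * Ih t * Sv t - mu_v * Iv t))
    by (field; lra).
  apply (is_derive_plus (K := R_AbsRing) (V := R_NormedModule));
    [apply Sv_derive|apply Iv_derive]; exact Ht.
Qed.

Definition N_min : R := Rmin (Nv 0) (beta_v / mu_v).
Definition N_max : R := Rmax (Nv 0) (beta_v / mu_v).

Lemma N_min_pos : 0 < N_min.
Proof.
  apply Rmin_glb_lt; [apply (proj1 Hhist 0); lra|apply Rdiv_lt_0_compat; lra].
Qed.

Lemma Nv_ge t : 0 <= t -> N_min <= Nv t.
Proof.
  apply (linear_ineq_ge_Rmin Nv (fun s => mu_v * (beta_v / mu_v - Nv s)) (beta_v / mu_v) mu_v 0);
    [lra| |apply Nv_derive|].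
  - apply cont_within_ge_plus; [apply Sv_cont|apply Iv_cont]; lra.
  - intros s _. lra.
Qed.

Lemma Nv_le t : 0 <= t -> Nv t <= N_max.
Proof.
  apply (linear_ineq_le_Rmax Nv (fun s => mu_v * (beta_v / mu_v - Nv s)) (beta_v / mu_v) mu_v 0);
    [lra| |apply Nv_derive|].
  - apply cont_within_ge_plus; [apply Sv_cont|apply Iv_cont]; lra.
  - intros s _. lra.
Qed.

Lemma Nv_pos t : - tau <= t -> 0 < Nv t.
Proof.
  intros Ht. destruct (Rle_or_lt t 0).
  - apply (proj1 Hhist t). lra.
  - generalize (Nv_ge t ltac:(lra)) N_min_pos. lra.
Qed.

Lemma Nv_eventually_le d : 0 < d ->
  Rbar_locally p_infty (fun t => Nv t <= beta_v / mu_v + d).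
Proof.
  apply (linear_ineq_eventually_le Nv (fun s => mu_v * (beta_v / mu_v - Nv s)) (beta_v / mu_v) mu_v
           Hmu_v Nv_derive).
  apply filter_forall. intros t. lra.
Qed.

Definition Ih_nonneg_upto (b : R) : Prop := forall t, 0 <= t <= b -> 0 <= Ih t.

Lemma Sv_nonneg_upto b t : Ih_nonneg_upto b -> 0 <= t <= b -> 0 <= Sv t.
Proof.
  intros HIh Ht.
  apply (nonneg_invariant Sv (fun s => beta_v - C_hv * Ih s * Sv s - mu_v * Sv s) 0 b
           (Sv_cont 0 (Rle_refl 0))); [| |intros s Hs Hneg|exact Ht].
  - intros s Hs. apply Sv_derive. lra.
  - apply (proj1 Hhist 0). lra.
  - assert (0 <= C_hv * Ih s) by (apply Rmult_le_pos; [lra|apply HIh; lra]). nra.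
Qed.

Lemma Iv_nonneg_upto b t : Ih_nonneg_upto b -> 0 <= t <= b -> 0 <= Iv t.
Proof.
  intros HIh Ht.
  assert (Hlow : 0 + (Iv 0 - 0) * exp (- (mu_v * (t - 0))) <= Iv t).
  { apply (linear_ineq_lower Iv (fun s => C_hv * Ih s * Sv s - mu_v * Iv s));
      [lra|apply Iv_cont; lra| |].
    - intros s Hs. apply Iv_derive. lra.
    - intros s Hs. assert (0 <= C_hv * Ih s * Sv s); [|lra].
      apply Rmult_le_pos; [apply Rmult_le_pos; [lra|apply HIh; lra]|].
      apply (Sv_nonneg_upto b); [exact HIh|lra]. }
  assert (HIv0 : 0 <= Iv 0) by (apply (proj1 Hhist 0); lra).
  assert (0 <= (Iv 0 - 0) * exp (- (mu_v * (t - 0))))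
    by (apply Rmult_le_pos; [lra|apply Rlt_le, exp_pos]).
  lra.
Qed.

Lemma Sh_nonneg_upto b t : Ih_nonneg_upto b -> 0 <= t <= b -> 0 <= Sh t.
Proof.
  intros HIh Ht.
  apply (nonneg_invariant Sh (fun s => beta_h - incidence s - mu_h * Sh s) 0 b
           (Sh_cont 0 (Rle_refl 0))); [| |intros s Hs Hneg|exact Ht].
  - intros s Hs. apply Sh_derive. lra.
  - apply (proj1 Hhist 0). lra.
  - assert (Hratio : 0 <= C_vh * (Iv s / Nv s)).
    { apply Rmult_le_pos; [lra|apply Rdiv_le_0_compat].
      - apply (Iv_nonneg_upto b); [exact HIh|lra].
      - apply Nv_pos. lra. }
    unfold incidence. nra.
Qed.

Lemma state_nonneg_upto b s : Ih_nonneg_upto b -> - tau <= s <= b ->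
  0 <= Sh s /\ 0 <= Sv s /\ 0 <= Iv s.
Proof.
  intros HIh Hs. destruct (Rle_or_lt s 0).
  - destruct (proj1 Hhist s ltac:(lra)) as (HSh & _ & HSv & HIv & _). auto.
  - split; [|split]; [eapply Sh_nonneg_upto|eapply Sv_nonneg_upto|eapply Iv_nonneg_upto];
      (exact HIh || lra).
Qed.

Lemma incidence_nonneg_upto b s : Ih_nonneg_upto b -> - tau <= s <= b -> 0 <= incidence s.
Proof.
  intros HIh Hs. destruct (state_nonneg_upto b s HIh Hs) as (HSh & HSv & HIv).
  assert (0 <= Iv s / Nv s) by (apply Rdiv_le_0_compat; [lra|apply Nv_pos; lra]).
  unfold incidence. apply Rmult_le_pos; [apply Rmult_le_pos|]; lra.
Qed.

Lemma Ih_pos_of_nonneg_upto b : 0 <= b -> Ih_nonneg_upto b -> 0 < Ih b.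
Proof.
  intros Hb HIh.
  assert (Hlow : 0 + (Ih 0 - 0) * exp (- (mu_h * (b - 0))) <= Ih b).
  { apply (linear_ineq_lower Ih (fun s => incidence (s - tau) - mu_h * Ih s));
      [lra|apply Ih_cont; lra| |].
    - intros s Hs. apply Ih_derive. lra.
    - intros s Hs. assert (0 <= incidence (s - tau)); [|lra].
      apply (incidence_nonneg_upto b); [exact HIh|lra]. }
  assert (0 < (Ih 0 - 0) * exp (- (mu_h * (b - 0))))
    by (apply Rmult_lt_0_compat; [generalize (proj2 Hhist); lra|apply exp_pos]).
  lra.
Qed.

Lemma Ih_pos t : 0 <= t -> 0 < Ih t.
Proof.
  intros Ht. apply Rnot_le_lt; intros Hneg.
  destruct (exists_first_root Ih 0 t Ht (Ih_cont 0 (Rle_refl 0))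
              (fun s Hs => continuity_pt_of_derive Ih s _ (Ih_derive s ltac:(lra)))
              (proj2 Hhist) Hneg) as [c [Hc [Hc0 Hbefore]]].
  enough (0 < Ih c) by lra.
  apply Ih_pos_of_nonneg_upto; [lra|]. intros s Hs.
  destruct (Req_dec s c) as [->|]; [lra|]. left. apply Hbefore. lra.
Qed.

Lemma Ih_nonneg_upto_all b : Ih_nonneg_upto b.
Proof. intros t Ht. left. apply Ih_pos. lra. Qed.

Lemma state_nonneg s : - tau <= s -> 0 <= Sh s /\ 0 <= Sv s /\ 0 <= Iv s.
Proof.
  intros Hs. apply (state_nonneg_upto (Rmax s 0)); [apply Ih_nonneg_upto_all|].
  generalize (Rmax_l s 0). lra.
Qed.

Lemma incidence_nonneg s : - tau <= s -> 0 <= incidence s.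
Proof.
  intros Hs. apply (incidence_nonneg_upto (Rmax s 0)); [apply Ih_nonneg_upto_all|].
  generalize (Rmax_l s 0). lra.
Qed.

Lemma Iv_ratio_bounds s : - tau <= s -> 0 <= Iv s / Nv s <= 1.
Proof.
  intros Hs. destruct (state_nonneg s Hs) as (_ & HSv & HIv).
  assert (HN := Nv_pos s Hs). split; [apply Rdiv_le_0_compat; lra|].
  apply (Rmult_le_reg_r (Nv s) _ _ HN). unfold Rdiv.
  rewrite Rmult_assoc, Rinv_l, Rmult_1_r, Rmult_1_l by lra. unfold Nv. lra.
Qed.

Definition Sh_max : R := Rmax (Sh 0) (beta_h / mu_h).

Lemma Sh_le t : 0 <= t -> Sh t <= Sh_max.
Proof.
  apply (linear_ineq_le_Rmax Sh (fun s => beta_h - incidence s - mu_h * Sh s) (beta_h / mu_h)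
           mu_h 0); [lra|apply Sh_cont; lra|apply Sh_derive|].
  intros s Hs. generalize (incidence_nonneg s ltac:(lra)).
  replace (mu_h * (beta_h / mu_h - Sh s)) with (beta_h - mu_h * Sh s) by (field; lra). lra.
Qed.

Lemma Iv_ratio_le t : 0 <= t -> Iv t / Nv t <= Iv t / N_min.
Proof.
  intros Ht. apply Rmult_le_compat_l; [apply (state_nonneg t); lra|].
  apply Rinv_le_contravar; [apply N_min_pos|apply Nv_ge, Ht].
Qed.

Lemma incidence_le_Iv t : 0 <= t -> incidence t <= C_vh * Sh_max / N_min * Iv t.
Proof.
  intros Ht. destruct (state_nonneg t ltac:(lra)) as (HSh & _ & HIv).
  assert (Hratio := Iv_ratio_le t Ht). assert (HN := N_min_pos).
  assert (0 <= Iv t / Nv t) by (apply Iv_ratio_bounds; lra).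
  replace (C_vh * Sh_max / N_min * Iv t) with (C_vh * (Iv t / N_min) * Sh_max) by (field; lra).
  unfold incidence. apply Rmult_le_compat; [nra|lra|nra|apply Sh_le, Ht].
Qed.

Lemma incidence_le t : 0 <= t -> incidence t <= C_vh * Sh_max.
Proof.
  intros Ht. destruct (Iv_ratio_bounds t ltac:(lra)).
  destruct (state_nonneg t ltac:(lra)) as (HSh & _ & _).
  unfold incidence. apply Rmult_le_compat; [nra|lra|nra|apply Sh_le, Ht].
Qed.

Definition Ih_max : R := Rmax (Ih tau) (C_vh * Sh_max / mu_h).

Lemma Ih_le t : tau <= t -> Ih t <= Ih_max.
Proof.
  apply (linear_ineq_le_Rmax Ih (fun s => incidence (s - tau) - mu_h * Ih s)
           (C_vh * Sh_max / mu_h) mu_h tau); [lra|apply Ih_cont; lra| |].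
  - intros s Hs. apply Ih_derive. lra.
  - intros s Hs. generalize (incidence_le (s - tau) ltac:(lra)).
    replace (mu_h * (C_vh * Sh_max / mu_h - Ih s)) with (C_vh * Sh_max - mu_h * Ih s)
      by (field; lra). lra.
Qed.

Lemma Sh_limsup_pos : limsup_pos Sh.
Proof.
  set (K := beta_h / (C_vh + mu_h)). assert (HK : 0 < K) by (apply Rdiv_lt_0_compat; lra).
  apply (limsup_pos_of_eventually_ge Sh (K - K / 2)); [lra|].
  apply (linear_ineq_eventually_ge Sh (fun s => beta_h - incidence s - mu_h * Sh s) K
           (C_vh + mu_h)); [lra|apply Sh_derive| |lra].
  eapply filter_imp; [|apply (eventually_gt 0)]. intros t Ht.
  destruct (Iv_ratio_bounds t ltac:(lra)). destruct (state_nonneg t ltac:(lra)) as (HSh & _).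
  assert (0 <= C_vh * Sh t * (1 - Iv t / Nv t))
    by (apply Rmult_le_pos; [apply Rmult_le_pos|]; lra).
  assert (incidence t <= C_vh * Sh t) by (unfold incidence; lra).
  replace ((C_vh + mu_h) * (K - Sh t)) with (beta_h - (C_vh + mu_h) * Sh t)
    by (unfold K; field; lra). lra.
Qed.

Lemma Sv_limsup_pos : limsup_pos Sv.
Proof.
  assert (HIm : 0 < Ih_max)
    by (apply (Rlt_le_trans _ (Ih tau)); [apply Ih_pos, Htau|apply Rmax_l]).
  set (m := C_hv * Ih_max + mu_v). assert (Hm : 0 < m) by (unfold m; nra).
  set (K := beta_v / m). assert (HK : 0 < K) by (apply Rdiv_lt_0_compat; lra).
  apply (limsup_pos_of_eventually_ge Sv (K - K / 2)); [lra|].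
  apply (linear_ineq_eventually_ge Sv (fun s => beta_v - C_hv * Ih s * Sv s - mu_v * Sv s) K m);
    [lra|apply Sv_derive| |lra].
  eapply filter_imp; [|apply (eventually_gt tau)]. intros t Ht.
  destruct (state_nonneg t ltac:(lra)) as (_ & HSv & _).
  assert (C_hv * Ih t * Sv t <= C_hv * Ih_max * Sv t).
  { apply Rmult_le_compat_r; [lra|]. apply Rmult_le_compat_l; [lra|apply Ih_le; lra]. }
  replace (m * (K - Sv t)) with (beta_v - m * Sv t) by (unfold K; field; lra).
  unfold m. lra.
Qed.

Lemma Sh_max_pos : 0 < Sh_max.
Proof. apply (Rlt_le_trans _ (beta_h / mu_h)); [apply Rdiv_lt_0_compat; lra|apply Rmax_r]. Qed.

Lemma N_max_pos : 0 < N_max.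
Proof. generalize N_min_pos (Nv_ge 0 (Rle_refl 0)) (Nv_le 0 (Rle_refl 0)). lra. Qed.

Lemma Iv_limsup_nonpos_of_Ih : limsup_nonpos Ih -> limsup_nonpos Iv.
Proof.
  intros HIh. assert (HN := N_max_pos).
  apply (limsup_nonpos_of_linear_ineq Iv (fun s => C_hv * Ih s * Sv s - mu_v * Iv s) mu_v
           Hmu_v Iv_derive).
  intros e He. set (e' := mu_v * e / (C_hv * N_max)).
  assert (He' : 0 < e') by (apply Rdiv_lt_0_compat; nra).
  eapply filter_imp; [|apply (filter_and _ _ (HIh e' He') (eventually_gt 0))].
  intros t [HIt Ht]. destruct (state_nonneg t ltac:(lra)) as (_ & HSv & HIv).
  assert (HSvN : Sv t <= N_max) by (generalize (Nv_le t ltac:(lra)); unfold Nv; lra).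
  assert (Hinf : C_hv * Ih t * Sv t <= C_hv * e' * N_max).
  { apply Rmult_le_compat; [|lra|apply Rmult_le_compat_l; lra|lra].
    generalize (Ih_pos t ltac:(lra)). nra. }
  replace (C_hv * e' * N_max) with (mu_v * e) in Hinf by (unfold e'; field; lra). lra.
Qed.

Lemma Ih_limsup_nonpos_of_Iv : limsup_nonpos Iv -> limsup_nonpos Ih.
Proof.
  intros HIv. set (c := C_vh * Sh_max / N_min).
  assert (Hc : 0 < c)
    by (apply Rdiv_lt_0_compat; [apply Rmult_lt_0_compat; [lra|apply Sh_max_pos]|apply N_min_pos]).
  apply (limsup_nonpos_of_linear_ineq Ih (fun s => incidence (s - tau) - mu_h * Ih s) mu_h
           Hmu_h Ih_derive).
  intros e He. set (e' := mu_h * e / c).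
  assert (He' : 0 < e') by (apply Rdiv_lt_0_compat; nra).
  eapply filter_imp;
    [|apply (filter_and _ _ (eventually_forall_after _ tau (HIv e' He')) (eventually_gt tau))].
  intros t [HIt Ht]. specialize (HIt (t - tau) (Rle_refl _)).
  assert (incidence (t - tau) <= c * Iv (t - tau)) by (apply incidence_le_Iv; lra).
  assert (HcIv : c * Iv (t - tau) <= c * e') by (apply Rmult_le_compat_l; lra).
  replace (c * e') with (mu_h * e) in HcIv by (unfold e'; field; lra). lra.
Qed.

Lemma Sv_eventually_ge_of_Ih r : limsup_nonpos Ih -> 0 < r < 1 ->
  Rbar_locally p_infty (fun t => r * (beta_v / mu_v) <= Sv t).
Proof.
  intros HIh Hr.
  apply (eventually_ge_of_perturbed_linear_ineq Sv
           (fun s => beta_v - C_hv * Ih s * Sv s - mu_v * Sv s) beta_v mu_v Hbeta_v Hmu_v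
           Sv_derive); [|exact Hr].
  intros e He.
  eapply filter_imp;
    [|apply (filter_and _ _ (HIh (e / C_hv) (Rdiv_lt_0_compat _ _ He HC_hv)) (eventually_gt 0))].
  intros t [HIt Ht]. destruct (state_nonneg t ltac:(lra)) as (_ & HSv & _).
  assert (C_hv * Ih t <= e).
  { apply (Rmult_le_compat_l C_hv) in HIt; [|lra].
    replace (C_hv * (e / C_hv)) with e in HIt by (field; lra). exact HIt. }
  assert (C_hv * Ih t * Sv t <= e * Sv t) by (apply Rmult_le_compat_r; lra).
  lra.
Qed.

Lemma Sh_eventually_ge_of_Iv r : limsup_nonpos Iv -> 0 < r < 1 ->
  Rbar_locally p_infty (fun t => r * (beta_h / mu_h) <= Sh t).
Proof.
  intros HIv Hr. assert (HN := N_min_pos).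
  apply (eventually_ge_of_perturbed_linear_ineq Sh
           (fun s => beta_h - incidence s - mu_h * Sh s) beta_h mu_h Hbeta_h Hmu_h Sh_derive);
    [|exact Hr].
  intros e He. set (e' := e * N_min / C_vh).
  assert (He' : 0 < e') by (apply Rdiv_lt_0_compat; nra).
  eapply filter_imp; [|apply (filter_and _ _ (HIv e' He') (eventually_gt 0))].
  intros t [HIt Ht]. destruct (state_nonneg t ltac:(lra)) as (HSh & _ & HIv0).
  assert (Hrate : C_vh * (Iv t / Nv t) <= e).
  { apply (Rle_trans _ (C_vh * (e' / N_min))).
    - apply Rmult_le_compat_l; [lra|]. apply (Rle_trans _ _ _ (Iv_ratio_le t ltac:(lra))).
      apply Rmult_le_compat_r; [left; apply Rinv_0_lt_compat, HN|exact HIt].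
    - right. unfold e'. field. lra. }
  assert (incidence t <= e * Sh t) by (apply Rmult_le_compat_r; assumption).
  lra.
Qed.

Lemma incidence_continuous s : 0 < s -> continuity_pt incidence s.
Proof.
  intros Hs. unfold incidence, Nv.
  assert (HSh := continuity_pt_of_derive Sh s _ (Sh_derive s Hs)).
  assert (HSv := continuity_pt_of_derive Sv s _ (Sv_derive s Hs)).
  assert (HIv := continuity_pt_of_derive Iv s _ (Iv_derive s Hs)).
  apply continuity_pt_mult; [apply continuity_pt_mult|exact HSh].
  { apply continuity_pt_const. intros ??. reflexivity. }
  apply continuity_pt_div; [exact HIv|apply continuity_pt_plus; assumption|].
  generalize (Nv_pos s ltac:(lra)). unfold Nv. lra.
Qed.

(* The base point [1] is arbitrary: only increments of the primitive are used. *)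
Definition incidence_primitive (x : R) : R := RInt incidence 1 x.

Lemma incidence_primitive_derive x : 0 < x -> is_derive incidence_primitive x (incidence x).
Proof.
  intros Hx. apply (is_derive_RInt (V := R_CompleteNormedModule) incidence _ 1 x).
  - assert (Hx2 : 0 < x / 2) by lra. exists (mkposreal _ Hx2). intros y Hy.
    change (Rabs (y - x) < x / 2) in Hy. apply Rabs_def2 in Hy.
    apply (RInt_correct (V := R_CompleteNormedModule)).
    apply (ex_RInt_continuous (V := R_CompleteNormedModule)). intros z Hz.
    apply continuity_pt_filterlim, incidence_continuous.
    assert (0 < Rmin 1 y) by (apply Rmin_glb_lt; lra). lra.
  - apply continuity_pt_filterlim, incidence_continuous, Hx.
Qed.

Lemma incidence_window t : tau < t -> exists c, t - tau <= c <= t /\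
  incidence_primitive t - incidence_primitive (t - tau) = tau * incidence c.
Proof.
  intros Ht.
  destruct (MVT_gen incidence_primitive (t - tau) t incidence) as [c [Hc Heq]];
    rewrite ?Rmin_left, ?Rmax_right in * by lra.
  - intros x Hx. apply incidence_primitive_derive. lra.
  - intros x Hx. apply (continuity_pt_of_derive _ x _ (incidence_primitive_derive x ltac:(lra))).
  - exists c. split; [exact Hc|]. rewrite Heq. ring.
Qed.

(* The integral term cancels the delayed incidence in [I_h']. *)
Definition lyapunov (k t : R) : R :=
  Iv t + k * (Ih t + (incidence_primitive t - incidence_primitive (t - tau))).

Lemma lyapunov_derive k t : tau < t -> is_derive (lyapunov k) t
  (C_hv * Ih t * Sv t - mu_v * Iv t + k * (incidence t - mu_h * Ih t)).
Proof.
  intros Ht.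
  assert (HIv := Iv_derive t ltac:(lra)). assert (HIh := Ih_derive t ltac:(lra)).
  assert (HG := incidence_primitive_derive t ltac:(lra)).
  assert (HGd := incidence_primitive_derive (t + - tau) ltac:(lra)).
  unfold lyapunov. auto_derive.
  - repeat split; eexists; eassumption.
  - rewrite (is_derive_unique (fun x : R => Iv x) _ _ HIv),
      (is_derive_unique (fun x : R => Ih x) _ _ HIh),
      (is_derive_unique (fun x : R => incidence_primitive x) _ _ HG),
      (is_derive_unique (fun x : R => incidence_primitive x) _ _ HGd).
    unfold Rminus. ring.
Qed.

Lemma lyapunov_ge k t : 0 <= k -> tau < t -> k * Ih t <= lyapunov k t.
Proof.
  intros Hk Ht. destruct (incidence_window t Ht) as [c [Hc Heq]].
  assert (0 <= tau * incidence c) by (apply Rmult_le_pos; [lra|apply incidence_nonneg; lra]).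
  assert (0 <= k * (tau * incidence c)) by (apply Rmult_le_pos; lra).
  destruct (state_nonneg t ltac:(lra)) as (_ & _ & HIv).
  unfold lyapunov. rewrite Heq. lra.
Qed.

Lemma lyapunov_limsup_nonpos k : 0 <= k -> limsup_nonpos Ih -> limsup_nonpos Iv ->
  limsup_nonpos (lyapunov k).
Proof.
  intros Hk HIh HIv e He.
  set (c := C_vh * Sh_max / N_min).
  assert (Hc : 0 < c)
    by (apply Rdiv_lt_0_compat; [apply Rmult_lt_0_compat; [lra|apply Sh_max_pos]|apply N_min_pos]).
  set (W := 1 + k + k * tau * c).
  assert (HW : 1 <= W) by (unfold W; assert (0 <= k * tau * c) by (apply Rmult_le_pos; nra); lra).
  set (e' := e / W). assert (He' : 0 < e') by (apply Rdiv_lt_0_compat; lra).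
  eapply filter_imp; [|apply (filter_and _ _ (filter_and _ _ (HIh e' He')
    (eventually_forall_after _ tau (HIv e' He'))) (eventually_gt tau))].
  intros t [[HIht HIvt] Ht].
  destruct (incidence_window t Ht) as [s [Hs Heq]].
  assert (Hinc : incidence s <= c * e').
  { apply (Rle_trans _ (c * Iv s)); [apply incidence_le_Iv; lra|].
    apply Rmult_le_compat_l; [lra|]. apply HIvt. lra. }
  assert (k * (Ih t + tau * incidence s) <= k * (e' + tau * (c * e'))).
  { apply Rmult_le_compat_l; [lra|]. apply Rplus_le_compat; [exact HIht|].
    apply Rmult_le_compat_l; lra. }
  assert (HIvt' : Iv t <= e') by (apply HIvt; lra).
  replace e with (e' + k * (e' + tau * (c * e')))
    by (unfold e'; unfold W in HW |- *; field; lra).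
  unfold lyapunov. rewrite Heq. lra.
Qed.

Definition lyapunov_weight (r : R) : R := C_hv * r * (beta_v / mu_v) / mu_h.

(* The weight makes the [I_h] terms combine into [C_hv I_h (S_v - r beta_v / mu_v)]; the
   [I_v] terms are then nonnegative because [r^3 R_0^2 >= 1]. *)
Lemma lyapunov_rate_nonneg r t : 0 < r < 1 -> mu_h ^ 2 * mu_v <= r ^ 3 * (C_vh * C_hv * beta_h) ->
  0 <= t -> r * (beta_v / mu_v) <= Sv t -> r * (beta_h / mu_h) <= Sh t ->
  r * Nv t <= beta_v / mu_v ->
  0 <= C_hv * Ih t * Sv t - mu_v * Iv t + lyapunov_weight r * (incidence t - mu_h * Ih t).
Proof.
  intros Hr HR Ht HSv HSh HNv. unfold lyapunov_weight.
  assert (HNst : 0 < beta_v / mu_v) by (apply Rdiv_lt_0_compat; lra).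
  assert (HN := Nv_pos t ltac:(lra)).
  destruct (state_nonneg t ltac:(lra)) as (_ & _ & HIv).
  assert (Hq : 0 <= Iv t / Nv t) by (apply Rdiv_le_0_compat; lra).
  assert (Hhost : 0 <= Ih t * (Sv t - r * (beta_v / mu_v)))
    by (apply Rmult_le_pos; [left; apply Ih_pos, Ht|lra]).
  assert (Hvector : mu_h * mu_v * Nv t <= r * C_vh * C_hv * (beta_v / mu_v) * Sh t).
  { apply (Rmult_le_reg_l (r * mu_h)); [nra|].
    apply (Rle_trans _ (mu_h ^ 2 * mu_v * (beta_v / mu_v))).
    - replace (r * mu_h * (mu_h * mu_v * Nv t)) with (mu_h ^ 2 * mu_v * (r * Nv t)) by ring.
      apply Rmult_le_compat_l; [|exact HNv].
      left. apply Rmult_lt_0_compat; [apply pow_lt|]; lra.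
    - apply (Rle_trans _ (r ^ 3 * (C_vh * C_hv * beta_h) * (beta_v / mu_v))).
      + apply Rmult_le_compat_r; lra.
      + replace (r ^ 3 * (C_vh * C_hv * beta_h) * (beta_v / mu_v))
          with (r * mu_h * (r * C_vh * C_hv * (beta_v / mu_v) * (r * (beta_h / mu_h))))
          by (field; lra).
        apply Rmult_le_compat_l; [nra|]. apply Rmult_le_compat_l; [|exact HSh].
        left. apply Rmult_lt_0_compat; [|exact HNst]. repeat apply Rmult_lt_0_compat; lra. }
  replace (C_hv * Ih t * Sv t - mu_v * Iv t
           + C_hv * r * (beta_v / mu_v) / mu_h * (incidence t - mu_h * Ih t))
    with (C_hv * (Ih t * (Sv t - r * (beta_v / mu_v)))
          + / mu_h * (Iv t / Nv t * (r * C_vh * C_hv * (beta_v / mu_v) * Sh t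
                                     - mu_h * mu_v * Nv t)))
    by (unfold incidence; field; lra).
  apply Rplus_le_le_0_compat; [apply Rmult_le_pos; lra|].
  apply Rmult_le_pos; [left; apply Rinv_0_lt_compat, Hmu_h|].
  apply Rmult_le_pos; lra.
Qed.

Lemma lyapunov_rate_eventually_nonneg r : limsup_nonpos Ih -> 0 < r < 1 ->
  mu_h ^ 2 * mu_v <= r ^ 3 * (C_vh * C_hv * beta_h) ->
  Rbar_locally p_infty (fun t => 0 <= C_hv * Ih t * Sv t - mu_v * Iv t
                                      + lyapunov_weight r * (incidence t - mu_h * Ih t)).
Proof.
  intros HIh Hr Hr3. assert (HIv := Iv_limsup_nonpos_of_Ih HIh).
  assert (Hd : 0 < beta_v / mu_v * (1 - r) / r)
    by (apply Rdiv_lt_0_compat; [apply Rmult_lt_0_compat; [apply Rdiv_lt_0_compat|]|]; lra).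
  eapply filter_imp; [|apply (filter_and _ _
    (filter_and _ _ (Sv_eventually_ge_of_Ih r HIh Hr) (Sh_eventually_ge_of_Iv r HIv Hr))
    (filter_and _ _ (Nv_eventually_le _ Hd) (eventually_gt 0)))].
  intros t [[HSv HSh] [HN Ht]].
  apply lyapunov_rate_nonneg; [exact Hr|exact Hr3|lra|exact HSv|exact HSh|].
  apply (Rmult_le_compat_l r) in HN; [|lra].
  replace (r * (beta_v / mu_v + beta_v / mu_v * (1 - r) / r)) with (beta_v / mu_v) in HN
    by (field; lra).
  exact HN.
Qed.

Lemma Ih_not_limsup_nonpos : mu_h ^ 2 * mu_v < C_vh * C_hv * beta_h -> ~ limsup_nonpos Ih.
Proof.
  intros HR HIh.
  destruct (cube_root_choice (C_vh * C_hv * beta_h) (mu_h ^ 2 * mu_v)) as [r [Hr Hr3]].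
  { split; [apply Rmult_lt_0_compat; [apply pow_lt|]; lra|exact HR]. }
  set (k := lyapunov_weight r).
  assert (Hk : 0 < k).
  { unfold k, lyapunov_weight. apply Rdiv_lt_0_compat; [|lra].
    apply Rmult_lt_0_compat; [nra|apply Rdiv_lt_0_compat; lra]. }
  destruct (lyapunov_rate_eventually_nonneg r HIh Hr Hr3) as [M HM].
  set (T := Rmax M tau + 1).
  assert (HT : M < T /\ tau < T) by (generalize (Rmax_l M tau) (Rmax_r M tau); unfold T; lra).
  apply (limsup_nonpos_not_eventually_ge (lyapunov k) (k * Ih T)).
  - apply Rmult_lt_0_compat; [exact Hk|apply Ih_pos; lra].
  - apply lyapunov_limsup_nonpos; [lra|exact HIh|apply Iv_limsup_nonpos_of_Ih, HIh].
  - exists T. intros t Ht. apply (Rle_trans _ (lyapunov k T)); [apply lyapunov_ge; lra|].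
    apply (nondecreasing_of_derive (lyapunov k) (fun s =>
             C_hv * Ih s * Sv s - mu_v * Iv s + k * (incidence s - mu_h * Ih s)));
      [lra|apply (cont_within_ge_of_derive T _ T _ (lyapunov_derive k T ltac:(lra)))| |].
    + intros s Hs. apply lyapunov_derive. lra.
    + intros s Hs. apply HM. lra.
Qed.

Theorem solution_weakly_persistent : mu_h ^ 2 * mu_v < C_vh * C_hv * beta_h ->
  limsup_pos Sh /\ limsup_pos Ih /\ limsup_pos Sv /\ limsup_pos Iv.
Proof.
  intros HR. split; [exact Sh_limsup_pos|]. split; [|split; [exact Sv_limsup_pos|]].
  - apply NNPP. intros HIh. exact (Ih_not_limsup_nonpos HR (not_limsup_pos Ih HIh)).
  - apply NNPP. intros HIv. apply (Ih_not_limsup_nonpos HR).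
    exact (Ih_limsup_nonpos_of_Iv (not_limsup_pos Iv HIv)).
Qed.

End VectorHostModel.

Lemma basic_R0_gt_1 (beta_h mu_h mu_v C_vh C_hv : R) : 0 < mu_h -> 0 < mu_v ->
  basic_R0 beta_h mu_h mu_v C_vh C_hv > 1 -> mu_h ^ 2 * mu_v < C_vh * C_hv * beta_h.
Proof.
  intros Hmu_h Hmu_v HR0. unfold basic_R0 in HR0.
  assert (Hden : 0 < mu_h ^ 2 * mu_v) by (apply Rmult_lt_0_compat; [apply pow_lt|]; lra).
  assert (Hgt : 1 < C_vh * C_hv * beta_h / (mu_h ^ 2 * mu_v)).
  { apply Rnot_le_lt. intros Hle. apply sqrt_le_1_alt in Hle. rewrite sqrt_1 in Hle. lra. }
  apply (Rmult_lt_compat_r (mu_h ^ 2 * mu_v)) in Hgt; [|exact Hden].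
  unfold Rdiv in Hgt. rewrite Rmult_assoc, Rinv_l, Rmult_1_r, Rmult_1_l in Hgt by lra.
  exact Hgt.
Qed.

Theorem corollary1 (beta_h beta_v mu_h mu_v C_vh C_hv : R) :
  0 < beta_h -> 0 < beta_v -> 0 < mu_h -> 0 < mu_v -> 0 < C_vh -> 0 < C_hv ->
  basic_R0 beta_h mu_h mu_v C_vh C_hv > 1 ->
  forall tau : R, 0 <= tau ->
    weakly_persistent_in_D beta_h beta_v mu_h mu_v C_vh C_hv tau.
Proof.
  intros Hbeta_h Hbeta_v Hmu_h Hmu_v HC_vh HC_hv HR0 tau Htau Sh Ih Sv Iv Hhist Hsol.
  apply (solution_weakly_persistent beta_h beta_v mu_h mu_v C_vh C_hv tau); try assumption.
  apply basic_R0_gt_1; assumption.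
Qed.
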